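(* Let $\varphi: S\to R$ be a ring morphism, $W\in S$, $(X,d)$ a finite rank matrix factorisation of $W$ over $R$ with fixed homogeneous $R$-basis $\{\xi_i\}_{i\in I}$, and $\mathbf{t}=\{t_1,\ldots,t_n\}$ a quasi-regular sequence in $R$ with each $t_j\cdot 1_X$ null-homotopic. Suppose given $S$-linear maps $\sigma: R/\mathbf{t}R\to K(\mathbf{t})$ (a morphism of complexes) and $h: K(\mathbf{t})\to K(\mathbf{t})$ of degree $-1$ such that $\pi\sigma = 1$, $\sigma\pi = 1 + \delta h + h\delta$, $h^2=0$, $h\sigma=0$ and $\pi h = 0$. Then the morphism $\pi: X\otimes_R K(\mathbf{t}) \to X/\mathbf{t}X$ is a homotopy equivalence of linear factorisations of $W$ over $S$, and \[ \sigma_\infty = \sum_{m\ge0}(hd)^m\sigma, \qquad h_\infty = \sum_{m\ge 0}(hd)^m h \] give a deformation retract datum: $\sigma_\infty: (X/\mathbf{t}X, d)\to (X\otimes K(\mathbf{t}), d+\delta)$ is a morphism of linear factorisations of $W$ over $S$, $\pi\sigma_\infty = 1$, and $\sigma_\infty\pi = 1 + (d+\delta)h_\infty + h_\infty(d+\delta)$.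
   Context: All rings commutative. A linear factorisation of $W$ over $R$: $\mathbb{Z}/2$-graded $R$-module with odd $R$-linear $d$, $d^2 = W\cdot 1$; finite rank matrix factorisation: components free of finite rank. The Koszul complex $K(\mathbf{t})$ is the exterior algebra $\wedge F$ on the free $R$-module $F$ with basis symbols $\mathrm{d}t_1,\ldots,\mathrm{d}t_n$, graded with $|\mathrm{d}t_i|=-1$, with differential $\delta$ given by contraction with $\sum_i t_i(\mathrm{d}t_i)^*$. $\pi: K(\mathbf{t})\to R/\mathbf{t}R$ is the augmentation (projection to degree $0$ followed by the quotient). $X\otimes_R K(\mathbf{t})$ denotes the tensor product with the $\mathbb{Z}/2$-folding of $K(\mathbf{t})$ (even degrees in degree $0$, odd in degree $1$), a linear factorisation of $W$ over $R$ with differential $d\otimes 1 + 1\otimes\delta$, written $d+\delta$; $X/\mathbf{t}X = X\otimes_RR/\mathbf{t}R$ with differential $d$. The $S$-linear maps $h,\sigma$ are extended to $X\otimes K(\mathbf{t})$, resp. $X\otimes R/\mathbf{t}R$, using the basis: $h(\xi_i\otimes m) = (-1)^{|\xi_i|}\xi_i\otimes h(m)$ and $\sigma(\xi_i\otimes p) = \xi_i\otimes\sigma(p)$; $\pi$ denotes $1\otimes\pi$ and $d$ denotes $d\otimes 1$. *)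

From HB Require Import structures.
From mathcomp Require Import all_boot all_order all_algebra.
Set Implicit Arguments. Unset Strict Implicit. Unset Printing Implicit Defensive.
Import Order.TTheory GRing.Theory Num.Theory.
Local Open Scope ring_scope.

(* K(t) = /\ F with basis e_A = dt_{a1}/\.../\dt_{ak}
   (A = {a1<...<ak} a subset of 'I_n), so an element of K(t) is a finite
   function {set 'I_n} -> R.  Koszul degree of e_A is -#|A|.
   X is free on the homogeneous basis (xi_i)_{i : I}, xi_i of parity p i.
   X (x) K(t) = sum_i xi_i (x) K(t): an element is a family (x_i)_i of
   elements of K(t), meaning sum_i xi_i (x) x_i.
   X / tX = sum_i xi_i (x) R/tR: a family (y_i)_i of elements of Q = R/tR. *)

Definition KT (R : comPzRingType) (n : nat) := {ffun {set 'I_n} -> R}.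
Definition XKT (R : comPzRingType) (I : finType) (n : nat) := {ffun I -> KT R n}.
Definition XQT (Q : comPzRingType) (I : finType) := {ffun I -> Q}.

Definition slin (S : comPzRingType) (U V : zmodType)
  (aU : S -> U -> U) (aV : S -> V -> V) (f : U -> V) :=
  forall s x y, f (aU s x + y) = aV s (f x) + f y.

Section Defs.
Variables (S R Q : comPzRingType) (phi : {rmorphism S -> R})
  (q : {rmorphism R -> Q}) (n : nat) (t : 'I_n -> R).
Variables (I : finType) (p : I -> bool) (D : I -> I -> R).

Definition is_quotient_by_t :=
  (forall y : Q, exists x : R, q x = y) /\
  (forall x : R, q x = 0 <-> exists c : 'I_n -> R, x = \sum_(j < n) c j * t j).

(* Koszul differential: contraction with sum_i t_i (dt_i)^*,
   delta(e_A) = sum_{a in A} (-1)^{#{b in A | b < a}} t_a e_{A \ a}. *)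
Definition kdelta (f : KT R n) : KT R n :=
  [ffun B : {set 'I_n} =>
     \sum_(a < n | a \notin B)
        (-1) ^+ #|[set b in B | (b < a)%N]| * t a * f (a |: B)].

Definition deg_supp (k : nat) (f : KT R n) := forall A : {set 'I_n}, #|A| != k -> f A = 0.

Definition quasi_regular :=
  forall k, (0 < k)%N -> forall f : KT R n, deg_supp k f -> kdelta f = 0 ->
    exists g : KT R n, kdelta g = f.

Definition piK (f : KT R n) : Q := q (f set0).

Definition scaleK (s : S) (f : KT R n) : KT R n := [ffun A => phi s * f A].
Definition scaleQ (s : S) (y : Q) : Q := q (phi s) * y.
Definition scaleXK (s : S) (x : XKT R I n) : XKT R I n :=
  [ffun i => scaleK s (x i)].
Definition scaleXQ (s : S) (y : XQT Q I) : XQT Q I :=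
  [ffun i => scaleQ s (y i)].

(* (X,d) a finite rank matrix factorisation of W over R (W acting via phi):
   d xi_j = sum_i D i j xi_i, d odd, d^2 = W. *)
Definition is_mf (W : S) :=
  (forall i j, D i j != 0 -> p i != p j) /\
  (forall i k, \sum_j D i j * D j k = (if i == k then phi W else 0)).

Definition null_homotopic (c : R) :=
  exists L : I -> I -> R,
    (forall i j, L i j != 0 -> p i != p j) /\
    (forall i k, \sum_j (D i j * L j k + L i j * D j k)
                 = (if i == k then c else 0)).

Definition dXK (x : XKT R I n) : XKT R I n :=
  [ffun i => [ffun A => \sum_j D i j * x j A]].
Definition deltaXK (x : XKT R I n) : XKT R I n :=
  [ffun i => if p i then - kdelta (x i) else kdelta (x i)].
Definition DXK (x : XKT R I n) : XKT R I n := dXK x + deltaXK x.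
Definition hXK (h : KT R n -> KT R n) (x : XKT R I n) : XKT R I n :=
  [ffun i => if p i then - h (x i) else h (x i)].
Definition piXK (x : XKT R I n) : XQT Q I := [ffun i => piK (x i)].
Definition sigmaXQ (sigma : Q -> KT R n) (y : XQT Q I) : XKT R I n :=
  [ffun i => sigma (y i)].
Definition dXQ (y : XQT Q I) : XQT Q I :=
  [ffun i => \sum_j q (D i j) * y j].

Definition homXK (b : bool) (x : XKT R I n) :=
  forall i (A : {set 'I_n}), x i A != 0 -> p i (+) odd #|A| = b.
Definition homXQ (b : bool) (y : XQT Q I) :=
  forall i, y i != 0 -> p i = b.

Definition parXK_XK (c : bool) (f : XKT R I n -> XKT R I n) :=
  forall b x, homXK b x -> homXK (b (+) c) (f x).
Definition parXK_XQ (c : bool) (f : XKT R I n -> XQT Q I) :=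
  forall b x, homXK b x -> homXQ (b (+) c) (f x).
Definition parXQ_XK (c : bool) (f : XQT Q I -> XKT R I n) :=
  forall b y, homXQ b y -> homXK (b (+) c) (f y).
Definition parXQ_XQ (c : bool) (f : XQT Q I -> XQT Q I) :=
  forall b y, homXQ b y -> homXQ (b (+) c) (f y).

Definition pi_homotopy_equivalence :=
  [/\ slin scaleXK scaleXQ piXK, parXK_XQ false piXK,
      (forall x, piXK (DXK x) = dXQ (piXK x)) &
      exists g : XQT Q I -> XKT R I n,
        [/\ slin scaleXQ scaleXK g, parXQ_XK false g,
            (forall y, DXK (g y) = g (dXQ y)),
            (exists H1 : XKT R I n -> XKT R I n,
               [/\ slin scaleXK scaleXK H1, parXK_XK true H1 &
                   forall x, g (piXK x) = x + DXK (H1 x) + H1 (DXK x)]) &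
            (exists H2 : XQT Q I -> XQT Q I,
               [/\ slin scaleXQ scaleXQ H2, parXQ_XQ true H2 &
                   forall y, piXK (g y) = y + dXQ (H2 y) + H2 (dXQ y)])]].

(* sigma_oo = sum_{m >= 0} (h d)^m sigma, h_oo = sum_{m >= 0} (h d)^m h;
   the terms with m > n vanish since h d raises the exterior degree. *)
Definition sigma_inf (h : KT R n -> KT R n) (sigma : Q -> KT R n)
  (y : XQT Q I) : XKT R I n :=
  \sum_(m < n.+1) iter m (fun z => hXK h (dXK z)) (sigmaXQ sigma y).
Definition h_inf (h : KT R n -> KT R n) (x : XKT R I n) : XKT R I n :=
  \sum_(m < n.+1) iter m (fun z => hXK h (dXK z)) (hXK h x).

End Defs.

From HB Require Import structures.
From mathcomp Require Import all_boot all_order all_algebra.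
Import GRing.Theory.
Set Implicit Arguments. Unset Strict Implicit. Unset Printing Implicit Defensive.
Local Open Scope ring_scope.

(* Put [N = h d] on [X (x) K(t)]. As [h] raises the exterior degree and [d] preserves it,
   [N ^ (n+1) = 0], so [1 - N] is invertible with inverse [\sum_(m <= n) N ^ m], and
   [sigma_oo], [h_oo] are this inverse applied to [sigma], [h]. Each identity to prove is
   checked after applying the injective map [1 - N]: from [d^2 = W], [d delta = - delta d]
   and [sigma pi = 1 + delta h + h delta] one gets
   [(1 - N)(d + delta) = delta (1 - N) - W h + sigma dQ pi] ([dQ] the differential of [X/tX]),
   and [h^2 = 0], [h sigma = 0], [pi h = 0], [delta sigma = 0] kill the extra terms. *)

Lemma sumr_neq0 (V : nmodType) (J : finType) (F : J -> V) :
  \sum_j F j != 0 -> exists j, F j != 0.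
Proof.
move=> nz; apply/existsP; apply: contraNT nz => /existsPn F0.
by rewrite big1 // => j _; apply/eqP/negbNE/F0.
Qed.

Section HomologicalPerturbation.
Variables (M N : zmodType) (k : nat).
Variables (d delta h w : {additive M -> M}) (sigma : {additive N -> M})
  (pi : {additive M -> N}) (dN : {additive N -> N}).

Definition unperturb (x : M) : M := x - h (d x).
Definition perturb (x : M) : M := \sum_(m < k.+1) iter m (fun z => h (d z)) x.

Lemma unperturbD x y : unperturb (x + y) = unperturb x + unperturb y.
Proof. by rewrite /unperturb (raddfD d) (raddfD h) opprD addrACA. Qed.

Lemma iter_hdB m : {morph iter m (fun z => h (d z)) : x y / x - y}.
Proof. by elim: m => [//|m IH] x y /=; rewrite IH !raddfB. Qed.

Lemma perturbB : {morph perturb : x y / x - y}.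
Proof. by move=> x y; rewrite /perturb -sumrB; apply: eq_bigr => m _; apply: iter_hdB. Qed.

Hypothesis hd_nilpotent : forall x, iter k.+1 (fun z => h (d z)) x = 0.

Lemma perturbK : cancel perturb unperturb.
Proof.
move=> x; rewrite /unperturb /perturb (raddf_sum d) (raddf_sum h) big_ord_recl big_ord_recr /=.
by have /= -> := hd_nilpotent x; rewrite addr0 addrK.
Qed.

Lemma unperturbK : cancel unperturb perturb.
Proof.
move=> x; rewrite /unperturb perturbB {2}/perturb big_ord_recr /=.
rewrite -iterSr hd_nilpotent addr0 /perturb big_ord_recl /=.
under [X in _ - X]eq_bigr do rewrite -iterSr /=.
by under eq_bigr do rewrite add0n; rewrite addrK.
Qed.

Lemma unperturb_inj : injective unperturb.
Proof. exact: can_inj unperturbK. Qed.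

Hypotheses (d_sqr : forall x, d (d x) = w x)
  (h_w : forall x, h (w x) = w (h x))
  (d_delta : forall x, d (delta x) = - delta (d x))
  (sigma_pi : forall x, sigma (pi x) = x + delta (h x) + h (delta x))
  (h_sqr : forall x, h (h x) = 0)
  (h_sigma : forall y, h (sigma y) = 0)
  (pi_h : forall x, pi (h x) = 0)
  (delta_sigma : forall y, delta (sigma y) = 0)
  (pi_sigma : forall y, pi (sigma y) = y)
  (pi_d : forall x, pi (d x) = dN (pi x)).

Lemma h_perturb x : h (perturb x) = h x.
Proof. by rewrite -{2}(perturbK x) /unperturb raddfB h_sqr subr0. Qed.

Lemma pi_perturb x : pi (perturb x) = pi x.
Proof. by rewrite -{2}(perturbK x) /unperturb raddfB pi_h subr0. Qed.

Lemma h_delta_d x : h (delta (d x)) = sigma (dN (pi x)) - d x - delta (h (d x)).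
Proof. by rewrite -pi_d sigma_pi -[_ - _ - _]addrA -opprD addrC addKr. Qed.

Lemma unperturb_D x :
  unperturb (d x + delta x) = delta (unperturb x) - w (h x) + sigma (dN (pi x)).
Proof.
rewrite unperturbD /unperturb d_sqr h_w d_delta (raddfN h) h_delta_d opprK (raddfB delta).
rewrite [_ - d x - _]addrAC [delta x + _ in LHS]addrA addrC.
rewrite addrACA subrr add0r [LHS]addrC [delta x + _ in LHS]addrA [RHS]addrAC.
by rewrite [delta x - _ + _]addrAC.
Qed.

Lemma perturb_sigma_morph y :
  d (perturb (sigma y)) + delta (perturb (sigma y)) = perturb (sigma (dN y)).
Proof.
apply: unperturb_inj; rewrite unperturb_D !perturbK h_perturb pi_perturb.
by rewrite delta_sigma h_sigma pi_sigma !raddf0 !add0r.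
Qed.

Lemma pi_perturb_sigma y : pi (perturb (sigma y)) = y.
Proof. by rewrite pi_perturb pi_sigma. Qed.

Lemma perturb_sigma_pi x :
  perturb (sigma (pi x))
  = x + (d (perturb (h x)) + delta (perturb (h x))) + perturb (h (d x + delta x)).
Proof.
apply: unperturb_inj; rewrite perturbK 2!unperturbD unperturb_D !perturbK.
rewrite h_perturb pi_perturb h_sqr pi_h !raddf0 sigma_pi !addr0 (raddfD h) /unperturb.
by rewrite [x - _ + _]addrAC addrA subrK.
Qed.

Lemma perturb_retract :
  [/\ forall y, d (perturb (sigma y)) + delta (perturb (sigma y)) = perturb (sigma (dN y)),
      forall y, pi (perturb (sigma y)) = y &
      forall x, perturb (sigma (pi x))
        = x + (d (perturb (h x)) + delta (perturb (h x))) + perturb (h (d x + delta x))].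
Proof.
by split; [exact: perturb_sigma_morph | exact: pi_perturb_sigma | exact: perturb_sigma_pi].
Qed.

End HomologicalPerturbation.

Section SLinear.
Variables (S : comPzRingType) (U V Z : zmodType).
Variables (aU : S -> U -> U) (aV : S -> V -> V) (aZ : S -> Z -> Z).

Lemma slin_comp (f : U -> V) (g : V -> Z) :
  slin aU aV f -> slin aV aZ g -> slin aU aZ (fun x => g (f x)).
Proof. by move=> lin_f lin_g s x y; rewrite lin_f lin_g. Qed.

Lemma slin_iter (f : U -> U) m : slin aU aU f -> slin aU aU (iter m f).
Proof. by move=> lin_f; elim: m => [//|m IH] s x y /=; rewrite IH lin_f. Qed.

Lemma slin_sum (J : finType) (F : J -> U -> V) :
  (forall s, nmod_morphism (aV s)) ->
  (forall j, slin aU aV (F j)) -> slin aU aV (fun x => \sum_j F j x).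
Proof.
move=> aV_add lin_F s x y.
have aV_sum (G : J -> V) : aV s (\sum_j G j) = \sum_j aV s (G j).
  have [a0 aD] := aV_add s; exact: (big_morph (aV s) aD a0 (index_enum J)).
by rewrite (aV_sum (fun j => F j x)) -big_split; apply: eq_bigr => j _; rewrite lin_F.
Qed.

Lemma slin_nmod_morphism (f : U -> V) :
  (forall x, aU 1 x = x) -> (forall y, aV 1 y = y) -> slin aU aV f -> nmod_morphism f.
Proof.
move=> aU1 aV1 lin_f; have fD x y : f (x + y) = f x + f y by rewrite -{1}(aU1 x) lin_f aV1.
by split=> //; apply: (addrI (f 0)); rewrite -fD !addr0.
Qed.

Lemma slin_scale (f : U -> V) :
  slin aU aV f -> f 0 = 0 -> forall s x, f (aU s x) = aV s (f x).
Proof. by move=> lin_f f0 s x; rewrite -[aU s x]addr0 lin_f f0 addr0. Qed.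

End SLinear.

Section Koszul.
Variables (R : comPzRingType) (n : nat) (t : 'I_n -> R).

Lemma kdelta_is_nmod_morphism : nmod_morphism (kdelta t).
Proof.
split=> [|f g]; apply/ffunP => B; rewrite !ffunE.
  by rewrite big1 // => a _; rewrite ffunE mulr0.
by rewrite -big_split; apply: eq_bigr => a _; rewrite ffunE mulrDr.
Qed.
HB.instance Definition _ :=
  GRing.isNmodMorphism.Build (KT R n) (KT R n) (kdelta t) kdelta_is_nmod_morphism.

Lemma kdelta_lin (J : finType) (c : J -> R) (f : J -> KT R n) :
  kdelta t [ffun A => \sum_j c j * f j A] = [ffun B => \sum_j c j * kdelta t (f j) B].
Proof.
apply/ffunP => B; rewrite !ffunE; under [RHS]eq_bigr do rewrite ffunE big_distrr.
rewrite exchange_big; apply: eq_bigr => a _ /=.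
by rewrite ffunE big_distrr; apply: eq_bigr => j _; rewrite mulrCA.
Qed.

Lemma piK_kdelta (Q : comPzRingType) (q : {rmorphism R -> Q}) f :
  (forall j, q (t j) = 0) -> piK q (kdelta t f) = 0.
Proof.
move=> q_t; rewrite /piK ffunE rmorph_sum big1 // => a _.
by rewrite !rmorphM q_t mulr0 mul0r.
Qed.

Lemma quotient_t_eq0 (Q : comPzRingType) (q : {rmorphism R -> Q}) :
  is_quotient_by_t q t -> forall j, q (t j) = 0.
Proof.
case=> _ q_ker j; apply/q_ker; exists (fun i => (i == j)%:R).
by rewrite (bigD1 j) //= eqxx mul1r big1 ?addr0 // => i /negbTE ->; rewrite mul0r.
Qed.

Lemma card_set_ltnS (A : {set 'I_n}) : (#|A| < n.+1)%N.
Proof. by rewrite ltnS (leq_trans (max_card _)) ?card_ord. Qed.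

Definition homog (k : nat) (f : KT R n) : KT R n :=
  [ffun A : {set 'I_n} => if #|A| == k then f A else 0].

Lemma homog_deg k f : deg_supp k (homog k f).
Proof. by move=> A kA; rewrite ffunE (negbTE kA). Qed.

Lemma sum_homog f : f = \sum_(k < n.+1) homog k f.
Proof.
apply/ffunP => A; rewrite sum_ffunE (bigD1 (Ordinal (card_set_ltnS A))) //= ffunE eqxx.
rewrite big1 ?addr0 // => k nk; rewrite ffunE; case: eqP => // kA.
by case/eqP: nk; apply: val_inj; rewrite /= kA.
Qed.

Variable h : {additive KT R n -> KT R n}.
Hypothesis h_deg : forall k f, deg_supp k f -> deg_supp k.+1 (h f).

Lemma h_supp f A : h f A != 0 -> exists2 B, f B != 0 & #|A| = #|B|.+1.
Proof.
rewrite {1}(sum_homog f) raddf_sum sum_ffunE => nz.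
have [k hk] := sumr_neq0 nz.
have kA : #|A| = k.+1 by apply/eqP; apply: contraNT hk => /(h_deg (@homog_deg k f)) ->.
have [B fB | f0] := pickP (fun B => homog k f B != 0); last first.
  move: hk; suff -> : homog k f = 0 by rewrite raddf0 ffunE eqxx.
  by apply/ffunP => B; rewrite [RHS]ffunE; apply/eqP/negbFE/f0.
move: fB; rewrite ffunE; case: ifP => [/eqP Bk fB|_]; last by rewrite eqxx.
by exists B; rewrite // kA Bk.
Qed.

End Koszul.

Section KoszulTensor.
Variables (S R Q : comPzRingType) (phi : {rmorphism S -> R}) (q : {rmorphism R -> Q}).
Variables (n : nat) (t : 'I_n -> R) (I : finType) (p : I -> bool) (D : I -> I -> R).

Local Notation XK := (XKT R I n).
Local Notation XQ := (XQT Q I).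

Lemma dXK_is_nmod_morphism : nmod_morphism (dXK (n:=n) D).
Proof.
split=> [|x y]; apply/ffunP => i; apply/ffunP => A; rewrite !ffunE.
  by rewrite big1 // => j _; rewrite !ffunE mulr0.
by rewrite -big_split; apply: eq_bigr => j _; rewrite !ffunE mulrDr.
Qed.
HB.instance Definition _ :=
  GRing.isNmodMorphism.Build XK XK (dXK D) dXK_is_nmod_morphism.

Lemma hXK_is_nmod_morphism (f : {additive KT R n -> KT R n}) : nmod_morphism (hXK (I:=I) p f).
Proof.
split=> [|x y]; apply/ffunP => i; rewrite !ffunE ?raddf0 ?raddfD.
  by case: (p i); rewrite ?oppr0.
by case: (p i); rewrite ?opprD.
Qed.
HB.instance Definition _ (f : {additive KT R n -> KT R n}) :=
  GRing.isNmodMorphism.Build XK XK (hXK p f) (hXK_is_nmod_morphism f).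

Lemma scaleXK_is_nmod_morphism s : nmod_morphism (scaleXK (n:=n) (I:=I) phi s).
Proof.
split=> [|x y]; apply/ffunP => i; apply/ffunP => A; rewrite !ffunE ?mulr0 //.
by rewrite mulrDr.
Qed.
HB.instance Definition _ s :=
  GRing.isNmodMorphism.Build XK XK (scaleXK phi s) (scaleXK_is_nmod_morphism s).

Lemma sigmaXQ_is_nmod_morphism (sigma : {additive Q -> KT R n}) :
  nmod_morphism (sigmaXQ (I:=I) sigma).
Proof. by split=> [|x y]; apply/ffunP => i; rewrite !ffunE ?raddf0 ?raddfD. Qed.
HB.instance Definition _ (sigma : {additive Q -> KT R n}) :=
  GRing.isNmodMorphism.Build XQ XK (sigmaXQ sigma) (sigmaXQ_is_nmod_morphism sigma).

Lemma piXK_is_nmod_morphism : nmod_morphism (piXK q (n:=n) (I:=I)).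
Proof. by split=> [|x y]; apply/ffunP => i; rewrite !ffunE /piK ffunE ?rmorph0 ?rmorphD. Qed.
HB.instance Definition _ :=
  GRing.isNmodMorphism.Build XK XQ (piXK q (n:=n) (I:=I)) piXK_is_nmod_morphism.

Lemma dXQ_is_nmod_morphism : nmod_morphism (dXQ q D).
Proof.
split=> [|x y]; apply/ffunP => i; rewrite !ffunE.
  by rewrite big1 // => j _; rewrite ffunE mulr0.
by rewrite -big_split; apply: eq_bigr => j _; rewrite ffunE mulrDr.
Qed.
HB.instance Definition _ :=
  GRing.isNmodMorphism.Build XQ XQ (dXQ q D) dXQ_is_nmod_morphism.

Lemma dXK_sqr W : is_mf phi p D W -> forall x : XK, dXK D (dXK D x) = scaleXK phi W x.
Proof.
case=> _ D_sqr x; apply/ffunP => i; apply/ffunP => A; rewrite !ffunE.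
under eq_bigr do rewrite !ffunE big_distrr /=.
rewrite exchange_big /=; under eq_bigr do under eq_bigr do rewrite mulrA.
under eq_bigr do rewrite -big_distrl D_sqr /=.
rewrite (bigD1 i) //= eqxx big1 ?addr0 // => j /negbTE ij.
by rewrite eq_sym ij mul0r.
Qed.

Lemma hXK_comp (f : {additive KT R n -> KT R n}) g (x : XK) :
  hXK p f (hXK p g x) = [ffun i => f (g (x i))].
Proof. by apply/ffunP => i; rewrite !ffunE; case: (p i); rewrite ?raddfN ?opprK. Qed.

Lemma hXK_scaleXK f s :
  (forall g, f (scaleK phi s g) = scaleK phi s (f g)) ->
  forall x : XK, hXK p f (scaleXK phi s x) = scaleXK phi s (hXK p f x).
Proof.
move=> fs x; apply/ffunP => i; rewrite !ffunE fs.
by case: (p i) => //; apply/ffunP => A; rewrite !ffunE mulrN.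
Qed.

(* [deltaXK t p] is [hXK p (kdelta t)] by definition; only the latter form is used. *)
Lemma dXK_hXK_kdelta : (forall i j, D i j != 0 -> p i != p j) ->
  forall x : XK, dXK D (hXK p (kdelta t) x) = - hXK p (kdelta t) (dXK D x).
Proof.
move=> D_odd x; apply/ffunP => i; apply/ffunP => A.
rewrite !ffunE kdelta_lin; case: (p i) (D_odd i) => D_odd_i;
  rewrite !ffunE ?opprK -?sumrN; apply: eq_bigr => j _.
  have [->|/D_odd_i] := eqVneq (D i j) 0; first by rewrite !mul0r ?oppr0.
  by rewrite ffunE; case: (p j).
have [->|/D_odd_i] := eqVneq (D i j) 0; first by rewrite !mul0r oppr0.
by rewrite ffunE; case: (p j) => // _; rewrite ffunE mulrN.
Qed.

Lemma hXK_sigmaXQ f (sigma : Q -> KT R n) :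
  (forall a, f (sigma a) = 0) -> forall y : XQ, hXK p f (sigmaXQ sigma y) = 0.
Proof.
by move=> f_sigma y; apply/ffunP => i; rewrite !ffunE f_sigma; case: (p i); rewrite ?oppr0.
Qed.

Lemma piXK_hXK f : (forall g, piK q (f g) = 0) -> forall x : XK, piXK q (hXK p f x) = 0.
Proof.
move=> pi_f x; apply/ffunP => i; have := pi_f (x i); rewrite !ffunE /piK.
by case: (p i) => pi_fx; rewrite ?ffunE ?rmorphN pi_fx ?oppr0.
Qed.

Lemma piXK_sigmaXQ (sigma : Q -> KT R n) :
  (forall a, piK q (sigma a) = a) -> forall y : XQ, piXK q (sigmaXQ sigma y) = y.
Proof. by move=> pi_sigma y; apply/ffunP => i; rewrite !ffunE pi_sigma. Qed.

Lemma piXK_dXK (x : XK) : piXK q (dXK D x) = dXQ q D (piXK q x).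
Proof.
apply/ffunP => i; rewrite !ffunE /piK ffunE rmorph_sum; apply: eq_bigr => j _.
by rewrite rmorphM !ffunE.
Qed.

Lemma sigmaXQ_piXK (h : {additive KT R n -> KT R n}) (sigma : Q -> KT R n) :
  (forall f, sigma (piK q f) = f + kdelta t (h f) + h (kdelta t f)) ->
  forall x : XK, sigmaXQ sigma (piXK q x)
                 = x + hXK p (kdelta t) (hXK p h x) + hXK p h (hXK p (kdelta t) x).
Proof. by move=> sigma_pi x; apply/ffunP => i; rewrite !hXK_comp !ffunE sigma_pi. Qed.

Lemma hXK_comp_eq0 (f : {additive KT R n -> KT R n}) g :
  (forall a, f (g a) = 0) -> forall x : XK, hXK p f (hXK p g x) = 0.
Proof. by move=> fg0 x; rewrite hXK_comp; apply/ffunP => i; rewrite !ffunE fg0. Qed.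

Lemma piXK_DXK : (forall j, q (t j) = 0) ->
  forall x : XK, piXK q (DXK t p D x) = dXQ q D (piXK q x).
Proof.
move=> q_t x; rewrite raddfD /= piXK_dXK (piXK_hXK (f := kdelta t)) ?addr0 // => f.
exact: piK_kdelta.
Qed.

Lemma hXK_neq0 f (x : XK) i A : (hXK p f x i A != 0) = (f (x i) A != 0).
Proof. by rewrite ffunE; case: (p i); rewrite ?ffunE ?oppr_eq0. Qed.

Definition vanishes_below k (x : XK) :=
  forall i (A : {set 'I_n}), (#|A| < k)%N -> x i A = 0.

Lemma dXK_vanishes_below k (x : XK) : vanishes_below k x -> vanishes_below k (dXK D x).
Proof. by move=> x0 i A kA; rewrite !ffunE big1 // => j _; rewrite x0 ?mulr0. Qed.

Lemma homXK_sum b (J : finType) (F : J -> XK) :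
  (forall j, homXK p b (F j)) -> homXK p b (\sum_j F j).
Proof.
move=> homF; apply: (big_ind (homXK p b)) => // [i A|x y hx hy i A].
  by rewrite !ffunE eqxx.
rewrite !ffunE; have [-> | /hx //] := eqVneq (x i A) 0; rewrite add0r; exact: hy.
Qed.

Lemma dXK_homXK b (x : XK) : (forall i j, D i j != 0 -> p i != p j) ->
  homXK p b x -> homXK p (~~ b) (dXK D x).
Proof.
move=> D_odd hx i A; rewrite !ffunE => /sumr_neq0 [j Dx].
have /D_odd Dij : D i j != 0 by apply: contraNneq Dx => ->; rewrite mul0r.
have /hx <- : x j A != 0 by apply: contraNneq Dx => ->; rewrite mulr0.
by move: Dij; case: (p i); case: (p j); case: (odd _).
Qed.

Lemma sigmaXQ_homXK b (sigma : {additive Q -> KT R n}) y :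
  (forall a, deg_supp 0 (sigma a)) -> homXQ p b y -> homXK p b (sigmaXQ sigma y).
Proof.
move=> sigma0 hy i A; rewrite !ffunE => nz.
have /eqP A0 : #|A| == 0%N by apply: contraNT nz => /sigma0 ->.
have /hy -> : y i != 0 by apply: contraNneq nz => ->; rewrite raddf0 ffunE.
by rewrite A0 addbF.
Qed.

Lemma piXK_homXQ b (x : XK) : homXK p b x -> homXQ p b (piXK q x).
Proof.
move=> hx i; rewrite !ffunE /piK => nz.
have /hx : x i set0 != 0 by apply: contraNneq nz => ->; rewrite rmorph0.
by rewrite cards0 addbF.
Qed.

Local Notation scK := (scaleK (n:=n) phi).
Local Notation scXK := (scaleXK (n:=n) (I:=I) phi).
Local Notation scXQ := (scaleXQ (I:=I) phi q).

Lemma scaleK1 f : scK 1 f = f.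
Proof. by apply/ffunP => A; rewrite ffunE rmorph1 mul1r. Qed.

Lemma scaleQ1 a : scaleQ phi q 1 a = a.
Proof. by rewrite /scaleQ !rmorph1 mul1r. Qed.

Lemma dXK_slin : slin scXK scXK (dXK D).
Proof.
move=> s x y; apply/ffunP => i; apply/ffunP => A; rewrite !ffunE mulr_sumr -big_split.
by apply: eq_bigr => j _; rewrite !ffunE mulrDr mulrCA.
Qed.

Lemma hXK_slin f : slin scK scK f -> slin scXK scXK (hXK p f).
Proof.
move=> lin_f s x y; apply/ffunP => i; rewrite !ffunE lin_f.
by case: (p i) => //; rewrite opprD; congr (_ + _); apply/ffunP => A; rewrite !ffunE mulrN.
Qed.

Lemma sigmaXQ_slin sigma : slin (scaleQ phi q) scK sigma -> slin scXQ scXK (sigmaXQ sigma).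
Proof. by move=> lin_sigma s x y; apply/ffunP => i; rewrite !ffunE lin_sigma. Qed.

Lemma piXK_slin : slin scXK scXQ (piXK q (n:=n) (I:=I)).
Proof. by move=> s x y; apply/ffunP => i; rewrite !ffunE /piK !ffunE rmorphD rmorphM. Qed.

Variable h : {additive KT R n -> KT R n}.
Hypothesis h_deg : forall k f, deg_supp k f -> deg_supp k.+1 (h f).

Lemma hXK_vanishes_below k (x : XK) : vanishes_below k x -> vanishes_below k.+1 (hXK p h x).
Proof.
move=> x0 i A kA; apply/eqP; rewrite -[_ == 0]negbK hXK_neq0.
apply/negP => /(h_supp h_deg) [B xB AB].
by move: xB; rewrite x0 ?eqxx // -ltnS -AB.
Qed.

Lemma hd_nilpotent (x : XK) : iter n.+1 (fun z => hXK p h (dXK D z)) x = 0.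
Proof.
have iter_vanishes m : vanishes_below m (iter m (fun z => hXK p h (dXK D z)) x).
  by elim: m => [i A //|m IH]; apply/hXK_vanishes_below/dXK_vanishes_below.
by apply/ffunP => i; apply/ffunP => A; rewrite iter_vanishes ?ffunE ?card_set_ltnS.
Qed.

Lemma hXK_homXK b (x : XK) : homXK p b x -> homXK p (~~ b) (hXK p h x).
Proof.
move=> hx i A; rewrite hXK_neq0 => /(h_supp h_deg) [B /hx <- ->].
by rewrite /= addbN.
Qed.

Lemma perturb_homXK b (x : XK) : (forall i j, D i j != 0 -> p i != p j) ->
  homXK p b x -> homXK p b (perturb n (dXK D) (hXK p h) x).
Proof.
move=> D_odd hx; apply: homXK_sum => m; elim: (val m) => [|m' IH] //=.
by rewrite -[b]negbK; apply/hXK_homXK/dXK_homXK.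
Qed.

Lemma perturb_slin : slin scK scK h -> slin scXK scXK (perturb n (dXK D) (hXK p h)).
Proof.
move=> lin_h; apply: slin_sum => [s | m]; first exact: scaleXK_is_nmod_morphism.
by apply/slin_iter/slin_comp; [exact: dXK_slin | exact: hXK_slin].
Qed.

End KoszulTensor.

Section DeformationRetract.
Variables (S R Q : comPzRingType) (phi : {rmorphism S -> R}) (W : S)
  (I : finType) (p : I -> bool) (D : I -> I -> R)
  (n : nat) (t : 'I_n -> R) (q : {rmorphism R -> Q})
  (sigma : Q -> KT R n) (h : KT R n -> KT R n).
Hypotheses (mf : is_mf phi p D W)
  (lin_sigma : slin (scaleQ phi q) (scaleK (n:=n) phi) sigma)
  (lin_h : slin (scaleK (n:=n) phi) (scaleK (n:=n) phi) h)
  (sigma_deg0 : forall a, deg_supp 0 (sigma a))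
  (kdelta_sigma : forall a, kdelta t (sigma a) = 0)
  (h_deg : forall k f, deg_supp k f -> deg_supp k.+1 (h f))
  (pi_sigma : forall a, piK q (sigma a) = a)
  (sigma_pi : forall f, sigma (piK q f) = f + kdelta t (h f) + h (kdelta t f))
  (h_sqr : forall f, h (h f) = 0)
  (h_sigma : forall a, h (sigma a) = 0)
  (pi_h : forall f, piK q (h f) = 0).

Let hA : {additive KT R n -> KT R n} := HB.pack h
  (GRing.isNmodMorphism.Build _ _ h
     (slin_nmod_morphism (scaleK1 phi (n := n)) (scaleK1 phi (n := n)) lin_h)).
Let sigmaA : {additive Q -> KT R n} := HB.pack sigma
  (GRing.isNmodMorphism.Build _ _ sigma
     (slin_nmod_morphism (scaleQ1 phi q) (scaleK1 phi (n := n)) lin_sigma)).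

Lemma sigma_inf_retract :
  [/\ slin (scaleXQ (I:=I) phi q) (scaleXK (I:=I) (n:=n) phi) (sigma_inf p D h sigma),
      parXQ_XK p false (sigma_inf p D h sigma),
      (forall y, DXK t p D (sigma_inf p D h sigma y) = sigma_inf p D h sigma (dXQ q D y)),
      (forall y, piXK q (sigma_inf p D h sigma y) = y) &
      (forall x, sigma_inf p D h sigma (piXK q x)
                 = x + DXK t p D (h_inf p D h x) + h_inf p D h (DXK t p D x))].
Proof.
have [DXK_sigma_inf piXK_sigma_inf sigma_inf_piXK] :=
  perturb_retract (hd_nilpotent p D (h := hA) h_deg) (dXK_sqr mf)
    (hXK_scaleXK p (slin_scale lin_h (raddf0 hA) W)) (dXK_hXK_kdelta t mf.1)
    (sigmaXQ_piXK p (h := hA) (sigma := sigmaA) sigma_pi)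
    (hXK_comp_eq0 p (f := hA) h_sqr) (hXK_sigmaXQ p (sigma := sigmaA) h_sigma)
    (piXK_hXK p pi_h) (hXK_sigmaXQ p (sigma := sigmaA) kdelta_sigma)
    (piXK_sigmaXQ (sigma := sigmaA) pi_sigma) (piXK_dXK q D).
split=> //; first exact: slin_comp (sigmaXQ_slin lin_sigma) (perturb_slin p D (h := hA) lin_h).
move=> b y /(sigmaXQ_homXK (sigma := sigmaA) sigma_deg0); rewrite addbF.
exact: (perturb_homXK (h := hA) h_deg mf.1).
Qed.

Lemma pi_homotopy_equivalence_sigma_inf :
  (forall j, q (t j) = 0) -> pi_homotopy_equivalence phi q t p D.
Proof.
move=> q_t; have [lin_sigma_inf even_sigma_inf DXK_sigma_inf piXK_sigma_inf retract]
  := sigma_inf_retract.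
split; [exact: piXK_slin | | exact: piXK_DXK | exists (sigma_inf p D h sigma); split=> //].
- by move=> b x /piXK_homXQ; rewrite addbF.
- exists (h_inf p D h); split=> //.
    exact: slin_comp (hXK_slin p lin_h) (perturb_slin p D (h := hA) lin_h).
  move=> b x /(hXK_homXK (h := hA) h_deg); rewrite addbT.
  exact: (perturb_homXK (h := hA) h_deg mf.1).
- exists (fun _ => 0); split=> [s x y | b y _ i | y].
  + by rewrite addr0; apply/ffunP => i; rewrite !ffunE /scaleQ mulr0.
  + by rewrite ffunE eqxx.
  + by rewrite piXK_sigma_inf raddf0 !addr0.
Qed.

End DeformationRetract.

Theorem proposition7p1
  (S R Q : comPzRingType) (phi : {rmorphism S -> R}) (W : S)
  (I : finType) (p : I -> bool) (D : I -> I -> R)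
  (n : nat) (t : 'I_n -> R) (q : {rmorphism R -> Q})
  (sigma : Q -> KT R n) (h : KT R n -> KT R n) :
  is_quotient_by_t q t ->
  is_mf phi p D W ->
  quasi_regular t ->
  (forall j : 'I_n, null_homotopic p D (t j)) ->
  slin (scaleQ phi q) (scaleK (n:=n) phi) sigma ->
  slin (scaleK (n:=n) phi) (scaleK (n:=n) phi) h ->
  (forall a, deg_supp 0 (sigma a)) ->
  (forall a, kdelta t (sigma a) = 0) ->
  (forall k f, deg_supp k f -> deg_supp k.+1 (h f)) ->
  (forall a, piK q (sigma a) = a) ->
  (forall f, sigma (piK q f) = f + kdelta t (h f) + h (kdelta t f)) ->
  (forall f, h (h f) = 0) ->
  (forall a, h (sigma a) = 0) ->
  (forall f, piK q (h f) = 0) ->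
  pi_homotopy_equivalence phi q t p D /\
  [/\ slin (scaleXQ (I:=I) phi q) (scaleXK (I:=I) (n:=n) phi) (sigma_inf p D h sigma),
      parXQ_XK p false (sigma_inf p D h sigma),
      (forall y, DXK t p D (sigma_inf p D h sigma y)
                 = sigma_inf p D h sigma (dXQ q D y)),
      (forall y, piXK q (sigma_inf p D h sigma y) = y) &
      (forall x, sigma_inf p D h sigma (piXK q x)
                 = x + DXK t p D (h_inf p D h x) + h_inf p D h (DXK t p D x))].
Proof.
(* Quasi-regularity of [t] and the null-homotopies of the [t_j] are what produce
   [sigma] and [h] in the first place; given them, they play no further role. *)
move=> /quotient_t_eq0 q_t mf _ _ lin_sigma lin_h *.
split; first exact: (pi_homotopy_equivalence_sigma_inf mf lin_sigma lin_h).
exact: (sigma_inf_retract mf lin_sigma lin_h).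
Qed.
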